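(* The alternating-minimization initialization algorithm described in the context generates objective values for the representation-aware $k$-means clustering problem that are monotonically non-increasing over the outer iterations $l \geq 2$, and it terminates after a finite number of iterations.
   Context: Data $\mathcal{D}=\{x^t\in\mathbb{R}^D\}_{t=1}^N$ are to be partitioned into $K$ clusters $C_1,\dots,C_K$ with binary assignment variables $z_{tk}$ (each point assigned to exactly one cluster, $\sum_k z_{tk}=1$) and cluster-usage binaries $u_k$, subject to cardinality constraints $N_{\min}u_k\le\sum_t z_{tk}\le N_{\max}u_k$. For each pair of clusters $i<j$, an interpretable separating hyperplane $(w^{ij},b^{ij})$ is found by the integer program: minimize $\sum_{t\in C_i\cup C_j}\xi_t$ subject to $(w^{ij})^Tx^t+b^{ij}\ge-\xi_t$ for $x^t\in C_i$, $(w^{ij})^Tx^t+b^{ij}+\epsilon\le\xi_t$ for $x^t\in C_j$, $\xi_t\ge 0$, with $w^{ij}=w^{ij}_+-w^{ij}_-$ integer, $w^{ij}_\pm\in\mathbb{Z}^D_{\ge0}$, $\sum_d (w^{ij}_{d,+}+w^{ij}_{d,-})\ge1$, binaries $y^{ij}_{d,\pm}$ with $y^{ij}_{d,+}+y^{ij}_{d,-}\le1$, $\sum_d(y^{ij}_{d,+}+y^{ij}_{d,-})\le\beta$, and $0\le w^{ij}_{d,\pm}\le M y^{ij}_{d,\pm}$ (here $M>1$ is the maximum integer coefficient, $\beta$ a sparsity bound, $\epsilon>0$ a fixed separation constant). Given hyperplanes, representation errors for every point are $(\xi^{ij}_+)_t$ (error if $t$ is assigned to cluster $i$) and $(\xi^{ij}_-)_t$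 (error if assigned to cluster $j$). The representation-aware $k$-means problem is: minimize $\sum_{k=1}^K\sum_{t}z_{tk}\|x^t-c_k\|^2+\lambda\sum_t\sum_{i=1}^{K-1}\sum_{j=i+1}^K\big(z_{ti}(\xi^{ij}_+)_t+z_{tj}(\xi^{ij}_-)_t\big)$ over $z$, centers $c_k$, and $u_k$, subject to the assignment and cardinality constraints, with $\lambda\ge0$. The initialization algorithm: set all $\xi=0$; initialize $z,c_k$ by standard $k$-means; then for outer iterations $l=1,2,\dots$: (a) repeatedly fix $c_k$ and solve the representation-aware $k$-means problem for $z$, then set $c_k=\frac{1}{N_k}\sum_t z_{tk}x^t$ with $N_k=\sum_t z_{tk}$, until convergence; (b) set $C_i=\{x^t:z_{ti}=1\}$ and for every pair $i<j$ solve the separating-hyperplane IP for $(w^{ij},b^{ij})$ and update $(\xi^{ij}_+)_t=\max(-(w^{ij})^Tx^t+b^{ij},0)$ and $(\xi^{ij}_-)_t=\max((w^{ij})^Tx^t+b^{ij}+\epsilon,0)$ for all $t$; the algorithm stops when the objective value no longer changes. *)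

(* R : realType, indices 'I_N (points), 'I_D (features),
   'I_K (clusters). *)
From HB Require Import structures.
From mathcomp Require Import all_boot all_order all_algebra.
From mathcomp Require Import reals.
From Stdlib Require Import Relations.
Set Implicit Arguments. Unset Strict Implicit. Unset Printing Implicit Defensive.
Import Order.TTheory GRing.Theory Num.Theory.
Local Open Scope ring_scope.

Section RepKMeans.
Context {R : realType} {N D K : nat}.

(* Data x^t, cluster-size bounds, lambda, epsilon, max coefficient M,
   sparsity bound beta. *)
Variables (x : 'I_N -> 'rV[R]_D) (Nmin Nmax : nat) (lam eps : R) (M beta : nat).

Definition sqn (v : 'rV[R]_D) : R := \sum_(d < D) v 0 d ^+ 2.

(* An assignment z : 'I_N -> 'I_K encodes binaries z_tk := (z t == k),
   which is exactly "each point assigned to exactly one cluster". *)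
Definition csize (z : 'I_N -> 'I_K) (k : 'I_K) : nat := #|[set t | z t == k]|.

(* cardinality constraints with cluster-usage binaries u_k *)
Definition feasible_z (z : 'I_N -> 'I_K) : Prop :=
  exists u : 'I_K -> bool, forall k,
    (Nmin * u k <= csize z k <= Nmax * u k)%N.

(* representation-aware k-means objective; xp i j t = (xi^{ij}_+)_t,
   xm i j t = (xi^{ij}_-)_t *)
Definition obj (z : 'I_N -> 'I_K) (c : 'I_K -> 'rV[R]_D)
    (xp xm : 'I_K -> 'I_K -> 'I_N -> R) : R :=
  \sum_(k < K) \sum_(t < N) (z t == k)%:R * sqn (x t - c k)
  + lam * \sum_(t < N) \sum_(i < K) \sum_(j < K | (i < j)%N)
      ((z t == i)%:R * xp i j t + (z t == j)%:R * xm i j t).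

Definition z_optimal (c : 'I_K -> 'rV[R]_D) (xp xm : 'I_K -> 'I_K -> 'I_N -> R)
    (z : 'I_N -> 'I_K) : Prop :=
  feasible_z z /\
  forall z', feasible_z z' -> obj z c xp xm <= obj z' c xp xm.

Definition centroid (z : 'I_N -> 'I_K) (k : 'I_K) : 'rV[R]_D :=
  (csize z k)%:R^-1 *: \sum_(t < N | z t == k) x t.

(* A candidate solution of the separating-hyperplane integer program:
   w_+ , w_- (nonneg. integers), y_+, y_- (binaries), b, and slacks xi. *)
Record hsol := HSol {
  h_wp : 'I_D -> nat; h_wm : 'I_D -> nat;
  h_yp : 'I_D -> bool; h_ym : 'I_D -> bool;
  h_b : R; h_xi : 'I_N -> R }.

Definition hw (h : hsol) (d : 'I_D) : R := (h_wp h d)%:R - (h_wm h d)%:R.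
Definition lin (h : hsol) (v : 'rV[R]_D) : R := \sum_(d < D) hw h d * v 0 d.

Definition sep_feasible (Ci Cj : pred 'I_N) (h : hsol) : Prop :=
  (forall t, Ci t -> - h_xi h t <= lin h (x t) + h_b h) /\
  (forall t, Cj t -> lin h (x t) + h_b h + eps <= h_xi h t) /\
  (forall t, Ci t || Cj t -> 0 <= h_xi h t) /\
  (forall d, (h_yp h d + h_ym h d <= 1)%N) /\
  (\sum_(d < D) (h_yp h d + h_ym h d) <= beta)%N /\
  (forall d, (h_wp h d <= M * h_yp h d)%N /\ (h_wm h d <= M * h_ym h d)%N) /\
  (1 <= \sum_(d < D) (h_wp h d + h_wm h d))%N.

Definition sep_obj (Ci Cj : pred 'I_N) (h : hsol) : R :=
  \sum_(t < N | Ci t || Cj t) h_xi h t.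

Definition sep_optimal (Ci Cj : pred 'I_N) (h : hsol) : Prop :=
  sep_feasible Ci Cj h /\
  forall h', sep_feasible Ci Cj h' -> sep_obj Ci Cj h <= sep_obj Ci Cj h'.

Definition cluster (z : 'I_N -> 'I_K) (i : 'I_K) : pred 'I_N := fun t => z t == i.

Definition new_xp (H : 'I_K -> 'I_K -> hsol) (i j : 'I_K) (t : 'I_N) : R :=
  Num.max (- (lin (H i j) (x t) + h_b (H i j))) 0.
Definition new_xm (H : 'I_K -> 'I_K -> hsol) (i j : 'I_K) (t : 'I_N) : R :=
  Num.max (lin (H i j) (x t) + h_b (H i j) + eps) 0.

(* PhInner: inside the inner loop (a);
   PhHyper: about to perform step (b); PhDone: stopped.
   st_hist records the objective values f_1, f_2, ... of the
   representation-aware k-means problem obtained at the end of step (a) of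
   each outer iteration l = 1, 2, ... *)
Inductive phase := PhInner | PhHyper | PhDone.

Record astate := AState {
  st_z : 'I_N -> 'I_K; st_c : 'I_K -> 'rV[R]_D;
  st_xp : 'I_K -> 'I_K -> 'I_N -> R; st_xm : 'I_K -> 'I_K -> 'I_N -> R;
  st_hist : seq R; st_phase : phase }.

Definition init_state (z0 : 'I_N -> 'I_K) (c0 : 'I_K -> 'rV[R]_D) : astate :=
  AState z0 c0 (fun _ _ _ => 0) (fun _ _ _ => 0) [::] PhInner.

(* One step of the algorithm (any optimal solution may be chosen). *)
Inductive step : astate -> astate -> Prop :=
  (* inner loop, not yet converged: objective changed *)
  | step_inner (s : astate) (z' : 'I_N -> 'I_K) :
      st_phase s = PhInner ->
      z_optimal (st_c s) (st_xp s) (st_xm s) z' ->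
      obj z' (centroid z') (st_xp s) (st_xm s)
        <> obj (st_z s) (st_c s) (st_xp s) (st_xm s) ->
      step s (AState z' (centroid z') (st_xp s) (st_xm s) (st_hist s) PhInner)
  (* inner loop converged, outer objective value unchanged: stop *)
  | step_stop (s : astate) (z' : 'I_N -> 'I_K) :
      st_phase s = PhInner ->
      z_optimal (st_c s) (st_xp s) (st_xm s) z' ->
      obj z' (centroid z') (st_xp s) (st_xm s)
        = obj (st_z s) (st_c s) (st_xp s) (st_xm s) ->
      st_hist s <> [::] ->
      last 0 (st_hist s) = obj z' (centroid z') (st_xp s) (st_xm s) ->
      step s (AState z' (centroid z') (st_xp s) (st_xm s)
                (rcons (st_hist s) (obj z' (centroid z') (st_xp s) (st_xm s)))
                PhDone)
  (* inner loop converged, outer objective value changed: go to step (b) *)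
  | step_go (s : astate) (z' : 'I_N -> 'I_K) :
      st_phase s = PhInner ->
      z_optimal (st_c s) (st_xp s) (st_xm s) z' ->
      obj z' (centroid z') (st_xp s) (st_xm s)
        = obj (st_z s) (st_c s) (st_xp s) (st_xm s) ->
      ~ (st_hist s <> [::] /\
         last 0 (st_hist s) = obj z' (centroid z') (st_xp s) (st_xm s)) ->
      step s (AState z' (centroid z') (st_xp s) (st_xm s)
                (rcons (st_hist s) (obj z' (centroid z') (st_xp s) (st_xm s)))
                PhHyper)
  (* step (b): optimal separating hyperplanes for every pair i < j *)
  | step_hyper (s : astate) (H : 'I_K -> 'I_K -> hsol) :
      st_phase s = PhHyper ->
      (forall i j : 'I_K, (i < j)%N ->
         sep_optimal (cluster (st_z s) i) (cluster (st_z s) j) (H i j)) ->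
      step s (AState (st_z s) (st_c s) (new_xp H) (new_xm H) (st_hist s) PhInner).

End RepKMeans.

(* Within an outer iteration the objective strictly decreases at every inner
   step (optimal assignment, then centroids), so no assignment is visited twice.
   The hyperplane step cannot increase the objective either: the hyperplanes of
   the previous iteration, with their slacks tightened, are feasible for the new
   clusters, so the optimal ones incur at most the same representation error.
   This gives f_{l+1} <= g(z_l) <= f_l for l >= 2, where g(z) is the objective
   of z with its centroids and optimal hyperplanes; g(z) does not depend on
   which optimal hyperplanes are chosen.  If the algorithm does not stop,
   f_{l+1} < f_l, so the count #{z | g z < f_l} + #{z | g z <= f_l}, bounded by
   2 K^N, strictly decreases. *)

From HB Require Import structures.
From mathcomp Require Import all_boot all_order all_algebra.
From mathcomp Require Import reals boolp ring zify.
From Stdlib Require Import Relations.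
Set Implicit Arguments. Unset Strict Implicit. Unset Printing Implicit Defensive.
Import Order.TTheory GRing.Theory Num.Theory.
Local Open Scope ring_scope.

Lemma sum_sqr_sub_mean_le (R : realFieldType) (T : finType) (A : {pred T})
    (a : T -> R) (c : R) :
  \sum_(t in A) (a t - #|A|%:R^-1 * \sum_(u in A) a u) ^+ 2
    <= \sum_(t in A) (a t - c) ^+ 2.
Proof.
set m := _ * _.
have [A0 | An0] := eqVneq #|A| 0%N.
  by rewrite !big_pred0 // => t; apply/negP => tA; move: A0; rewrite (cardD1 t) tA.
have sum_a : \sum_(t in A) a t = #|A|%:R * m.
  by rewrite /m mulrA divff ?mul1r // pnatr_eq0.
have -> : \sum_(t in A) (a t - c) ^+ 2
    = \sum_(t in A) (a t - m) ^+ 2 + #|A|%:R * (m - c) ^+ 2.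
  have expand t : (a t - c) ^+ 2 = (a t - m) ^+ 2 + (2 * (m - c) * a t
                                   + (c ^+ 2 - m ^+ 2)).
    by ring.
  rewrite (eq_bigr _ (fun t _ => expand t)) big_split /= big_split /=.
  by rewrite -mulr_sumr sum_a sumr_const -mulr_natl; congr (_ + _); ring.
by rewrite lerDl mulr_ge0 ?ler0n ?sqr_ge0.
Qed.

Section KMeans.
Context {R : realType} {N D K : nat}.
Variables (x : 'I_N -> 'rV[R]_D) (Nmin Nmax : nat) (lam : R).

Local Notation obj := (obj x lam).
Local Notation centroid := (centroid x).

Lemma obj_centroid_le (z : 'I_N -> 'I_K) c xp xm :
  obj z (centroid z) xp xm <= obj z c xp xm.
Proof.
rewrite /obj lerD2r; apply: ler_sum => k _.
have in_cluster (f : 'I_N -> R) :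
    \sum_(t < N) (z t == k)%:R * f t = \sum_(t in [set t | z t == k]) f t.
  rewrite [RHS]big_mkcond /=; apply: eq_bigr => t _.
  by rewrite inE; case: (z t == k); rewrite ?mul1r ?mul0r.
rewrite !in_cluster /sqn exchange_big [X in _ <= X]exchange_big /=.
apply: ler_sum => d _.
have := sum_sqr_sub_mean_le [set t | z t == k] (fun t => x t 0 d) (c k 0 d).
congr (_ <= _); apply: eq_bigr => t _; rewrite !mxE // summxE /csize.
by rewrite (eq_bigl (fun t => z t == k)) // => u; rewrite inE.
Qed.

Lemma obj_z_step_le c xp xm (z z' : 'I_N -> 'I_K) :
  feasible_z Nmin Nmax z -> z_optimal x Nmin Nmax lam c xp xm z' ->
  obj z' (centroid z') xp xm <= obj z c xp xm.
Proof. by move=> fz [_ opt]; apply: le_trans (opt _ fz); exact: obj_centroid_le. Qed.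

End KMeans.

Section Separation.
Context {R : realType} {N D : nat}.
Variables (x : 'I_N -> 'rV[R]_D) (eps : R) (M beta : nat) (Ci Cj : pred 'I_N).
Hypothesis disjoint_clusters : forall t, Ci t -> ~~ Cj t.

Definition hsol_admissible (h : @hsol R N D) : Prop :=
  (forall d, (h_yp h d + h_ym h d <= 1)%N) /\
  (\sum_(d < D) (h_yp h d + h_ym h d) <= beta)%N /\
  (forall d, (h_wp h d <= M * h_yp h d)%N /\ (h_wm h d <= M * h_ym h d)%N) /\
  (1 <= \sum_(d < D) (h_wp h d + h_wm h d))%N.

Definition err_pos (h : @hsol R N D) (t : 'I_N) : R :=
  Num.max (- (lin h (x t) + h_b h)) 0.
Definition err_neg (h : @hsol R N D) (t : 'I_N) : R :=
  Num.max (lin h (x t) + h_b h + eps) 0.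

Definition sep_error (h : @hsol R N D) : R :=
  \sum_(t < N) ((Ci t)%:R * err_pos h t + (Cj t)%:R * err_neg h t).

Definition tight_slacks (h : @hsol R N D) : @hsol R N D :=
  HSol (h_wp h) (h_wm h) (h_yp h) (h_ym h) (h_b h)
    (fun t => if Ci t then err_pos h t else err_neg h t).

Lemma sep_feasible_admissible (h : @hsol R N D) :
  sep_feasible x eps M beta Ci Cj h -> hsol_admissible h.
Proof. by case=> _ [_ [_ adm]]. Qed.

Lemma sep_feasible_tight_slacks (h : @hsol R N D) :
  hsol_admissible h -> sep_feasible x eps M beta Ci Cj (tight_slacks h).
Proof.
move=> adm; split; [|split; [|split=> //]].
- by move=> t /= ->; rewrite lerNl le_max lexx.
- move=> t /= Cjt; have /negbTE -> : ~~ Ci t.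
    by apply: contraL Cjt; exact: disjoint_clusters.
  by rewrite le_max lexx.
- by move=> t _ /=; case: (Ci t); rewrite le_max lexx orbT.
Qed.

Lemma sep_obj_indicator (h : @hsol R N D) :
  sep_obj Ci Cj h = \sum_(t < N) (Ci t || Cj t)%:R * h_xi h t.
Proof.
rewrite /sep_obj big_mkcond /=; apply: eq_bigr => t _.
by case: (_ || _); rewrite ?mul1r ?mul0r.
Qed.

Lemma sep_error_le_obj (h : @hsol R N D) :
  sep_feasible x eps M beta Ci Cj h -> sep_error h <= sep_obj Ci Cj h.
Proof.
case=> [pos [neg [xi_ge0 _]]]; rewrite sep_obj_indicator; apply: ler_sum => t _.
case Cit: (Ci t).
  have /negbTE Cjt := disjoint_clusters Cit.
  by rewrite Cjt /= !mul1r mul0r addr0 ge_max lerNl pos // xi_ge0 ?Cit.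
case Cjt: (Cj t) => /=; rewrite ?mul0r ?mul1r ?add0r //.
by rewrite ge_max neg // xi_ge0 ?Cjt ?orbT.
Qed.

Lemma sep_obj_tight_slacks (h : @hsol R N D) :
  sep_obj Ci Cj (tight_slacks h) = sep_error h.
Proof.
rewrite sep_obj_indicator; apply: eq_bigr => t _ /=.
case Cit: (Ci t); last by rewrite mul0r add0r.
by have /negbTE -> := disjoint_clusters Cit; rewrite mul1r mul0r addr0.
Qed.

Lemma sep_error_optimal_le (h h' : @hsol R N D) :
  sep_optimal x eps M beta Ci Cj h -> hsol_admissible h' ->
  sep_error h <= sep_error h'.
Proof.
move=> [feas opt] adm'; apply: le_trans (sep_error_le_obj feas) _.
by rewrite -sep_obj_tight_slacks; apply/opt/sep_feasible_tight_slacks.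
Qed.

End Separation.

Section Hyperplanes.
Context {R : realType} {N D K : nat}.
Variables (x : 'I_N -> 'rV[R]_D) (lam eps : R) (M beta : nat).
Hypothesis lam_ge0 : 0 <= lam.

Definition hyperplanes_admissible (H : 'I_K -> 'I_K -> @hsol R N D) : Prop :=
  forall i j : 'I_K, (i < j)%N -> hsol_admissible M beta (H i j).

Definition optimal_hyperplanes (z : 'I_N -> 'I_K) (H : 'I_K -> 'I_K -> @hsol R N D) :=
  forall i j : 'I_K, (i < j)%N ->
    sep_optimal x eps M beta (cluster z i) (cluster z j) (H i j).

Lemma optimal_hyperplanes_admissible z H :
  optimal_hyperplanes z H -> hyperplanes_admissible H.
Proof. by move=> opt i j ij; case: (opt i j ij) => /sep_feasible_admissible. Qed.

Lemma obj_optimal_hyperplanes_le z c H H' :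
  optimal_hyperplanes z H -> hyperplanes_admissible H' ->
  obj x lam z c (new_xp x H) (new_xm x eps H)
    <= obj x lam z c (new_xp x H') (new_xm x eps H').
Proof.
move=> opt adm'; rewrite /obj lerD2l ler_wpM2l //.
rewrite exchange_big [X in _ <= X]exchange_big; apply: ler_sum => i _.
rewrite exchange_big [X in _ <= X]exchange_big; apply: ler_sum => j ij /=.
apply: (sep_error_optimal_le _ (opt i j ij) (adm' i j ij)) => t.
by rewrite /cluster => /eqP ->; apply: contraTneq ij => ->; rewrite ltnn.
Qed.

End Hyperplanes.

Section Rank.
Variables (R : numDomainType) (T : finType) (val : T -> R -> Prop).

Definition rank_below (v : R) : nat :=
  #|[set t | `[< exists2 r, val t r & r < v >]]|
  + #|[set t | `[< exists2 r, val t r & r <= v >]]|.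

Lemma rank_below_le v : (rank_below v <= 2 * #|T|)%N.
Proof. by rewrite /rank_below mul2n -addnn leq_add ?max_card. Qed.

Hypothesis val_functional : forall t r r', val t r -> val t r' -> r = r'.

Lemma rank_below_lt t r v w :
  val t r -> v < w -> v <= r <= w -> (rank_below v < rank_below w)%N.
Proof.
move=> vtr vw /andP[vr rw].
pose below (lt : R -> R -> bool) u := [set t | `[< exists2 r, val t r & lt r u >]].
have sub (lt : R -> R -> bool) : (forall a, lt a v -> lt a w) ->
    below lt v \subset below lt w.
  move=> mono; apply/subsetP => u; rewrite !inE => /asboolP[a vua lta].
  by apply/asboolP; exists a; last exact: mono.
have sub_lt := sub _ (fun a av => lt_trans av vw).
have sub_le := sub _ (fun a av => le_trans av (ltW vw)).
have card_lt (lt : R -> R -> bool) : below lt v \subset below lt w ->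
    lt r w -> ~~ lt r v -> (#|below lt v| < #|below lt w|)%N.
  move=> svw rw' nrv; apply/proper_card; rewrite properE svw /=.
  apply/subsetPn; exists t; rewrite inE; apply/asboolP; first by exists r.
  by case=> r' vtr'; rewrite -(val_functional vtr vtr') (negbTE nrv).
rewrite /rank_below; move: rw; rewrite le_eqVlt => /orP[/eqP rw | rw].
  have rw' : r <= w by rewrite rw.
  by rewrite -addnS leq_add ?subset_leq_card ?card_lt // rw lt_geF.
by rewrite -addSn leq_add ?subset_leq_card ?card_lt // le_gtF.
Qed.

End Rank.

Lemma finfunK (aT : finType) (rT : Type) (g : aT -> rT) :
  fun_of_fin [ffun t => g t] = g.
Proof. exact/funext/ffunE. Qed.

Definition nonincreasing_tail (R : numDomainType) (h : seq R) : Prop :=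
  forall l, (1 <= l)%N -> (l.+1 < size h)%N -> nth 0 h l.+1 <= nth 0 h l.

Lemma nonincreasing_tail_rcons (R : numDomainType) (h : seq R) v :
  nonincreasing_tail h -> ((2 <= size h)%N -> v <= last 0 h) ->
  nonincreasing_tail (rcons h v).
Proof.
move=> mono v_le l l_ge1; rewrite size_rcons ltnS => l_lt; rewrite !nth_rcons l_lt.
case: ltnP => [|l_ge]; first exact: mono l_ge1.
have size_h : size h = l.+1 by apply/eqP; rewrite eqn_leq l_ge l_lt.
rewrite size_h eqxx; have -> : l = (size h).-1 by rewrite size_h.
by rewrite nth_last v_le // size_h.
Qed.

Section Algorithm.
Context {R : realType} {N D K : nat}.
Variables (x : 'I_N -> 'rV[R]_D) (Nmin Nmax : nat) (lam eps : R) (M beta : nat).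
Hypothesis lam_ge0 : 0 <= lam.

Local Notation obj := (obj x lam).
Local Notation centroid := (centroid x).
Local Notation feasible_z := (feasible_z Nmin Nmax).
Local Notation step := (step x Nmin Nmax lam eps M beta).
Local Notation state := (@astate R N D K).
Local Notation terminates := (Acc (fun s' s : state => step s s')).

Definition current_obj (s : state) : R := obj (st_z s) (st_c s) (st_xp s) (st_xm s).

Definition hyperplane_errors (xp xm : 'I_K -> 'I_K -> 'I_N -> R) : Prop :=
  exists2 H, hyperplanes_admissible M beta H & xp = new_xp x H /\ xm = new_xm x eps H.

Definition refined_obj (z : 'I_N -> 'I_K) (r : R) : Prop :=
  exists2 H, optimal_hyperplanes x eps M beta z H &
    obj z (centroid z) (new_xp x H) (new_xm x eps H) = r.

Lemma refined_obj_functional z r r' : refined_obj z r -> refined_obj z r' -> r = r'.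
Proof.
move=> [H opt <-] [H' opt' <-]; apply/le_anti/andP; split.
  apply: (obj_optimal_hyperplanes_le lam_ge0 _ opt).
  exact: optimal_hyperplanes_admissible opt'.
apply: (obj_optimal_hyperplanes_le lam_ge0 _ opt').
exact: optimal_hyperplanes_admissible opt.
Qed.

Definition invariant (s : state) : Prop :=
  nonincreasing_tail (st_hist s) /\
  match st_phase s with
  | PhInner =>
      [/\ feasible_z (st_z s),
          (0 < size (st_hist s))%N -> hyperplane_errors (st_xp s) (st_xm s) &
          (1 < size (st_hist s))%N -> exists z r,
            refined_obj z r /\ current_obj s <= r <= last 0 (st_hist s)]
  | PhHyper =>
      [/\ feasible_z (st_z s), st_c s = centroid (st_z s),
          (0 < size (st_hist s))%N, last 0 (st_hist s) = current_obj s &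
          (1 < size (st_hist s))%N -> hyperplane_errors (st_xp s) (st_xm s)]
  | PhDone => True
  end.

Lemma step_invariant s s' : invariant s -> step s s' -> invariant s'.
Proof.
move=> inv st; case: st inv => {s s'} [s z' ph opt _ | s z' ph opt obj_eq _ last_eq
  | s z' ph opt obj_eq not_stop | s H ph opt] [mono]; rewrite ph /= => inv_s.
- have [feas hyp between] := inv_s; split=> //; split=> //; first by case: opt.
  move=> /between[z [r [rz /andP[cur_le le_last]]]]; exists z, r; split=> //.
  by rewrite le_last andbT (le_trans (obj_z_step_le feas opt)).
- split=> //; apply: nonincreasing_tail_rcons => // _; by rewrite last_eq.
- have [feas hyp between] := inv_s; split.
    apply: nonincreasing_tail_rcons => // /between[_ [r [_ /andP[cur_le le_last]]]].
    by rewrite obj_eq (le_trans cur_le).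
  split=> //; first by case: opt.
  - by rewrite size_rcons.
  - by rewrite last_rcons.
  - by rewrite size_rcons ltnS => /hyp.
- have [feas c_eq hist_ne last_eq hyp] := inv_s; split=> //; split=> //.
    by move=> _; exists H => //; exact: optimal_hyperplanes_admissible opt.
  move=> /hyp[H' adm' [xp_eq xm_eq]]; exists (st_z s).
  exists (obj (st_z s) (st_c s) (new_xp x H) (new_xm x eps H)); split.
    by exists H; rewrite ?c_eq.
  rewrite lexx last_eq /current_obj /= xp_eq xm_eq.
  by apply: (obj_optimal_hyperplanes_le lam_ge0 _ opt).
Qed.

Definition rank_bound : nat := 2 * #|{ffun 'I_N -> 'I_K}|.

Definition inner_rank (s : state) : nat :=
  rank_below (fun (f : {ffun 'I_N -> 'I_K}) r =>
    r = obj f (centroid f) (st_xp s) (st_xm s)) (current_obj s).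

Definition outer_rank (v : R) : nat :=
  rank_below (fun f : {ffun 'I_N -> 'I_K} => refined_obj f) v.

(* The first two recorded values need not be ordered (the errors start at 0), so
   before that the measure only counts the remaining phases. *)
Definition outer_measure (s : state) : nat :=
  (match size (st_hist s) with
   | 0 => 2 * rank_bound + 4
   | 1 => 2 * rank_bound + 2
   | _ => 2 * outer_rank (last 0%R (st_hist s))
   end + (if st_phase s is PhHyper then 1 else 0))%N.

Definition measure (s : state) : nat :=
  outer_measure s * rank_bound.+1 + inner_rank s.

Lemma measure_lt_outer s s' :
  (outer_measure s' < outer_measure s)%N -> (measure s' < measure s)%N.
Proof.
have : (inner_rank s' <= rank_bound)%N := rank_below_le _ _.
rewrite /measure; nia.
Qed.

Lemma step_measure s s' : invariant s -> step s s' ->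
  st_phase s' = PhDone \/ (measure s' < measure s)%N.
Proof.
move=> inv st; case: st inv => {s s'} [s z' ph opt obj_neq | s z' ph _ _ _ _
  | s z' ph opt obj_eq not_stop | s H ph _] [_]; rewrite ph /= => inv_s;
  [right | by left | right | right].
- have [feas _ _] := inv_s.
  rewrite /measure /outer_measure /= ph ltn_add2l.
  apply: (rank_below_lt _ (t := [ffun t => z' t])); first by move=> f r r' -> ->.
  + by rewrite finfunK.
  + by rewrite lt_neqAle (obj_z_step_le feas opt) andbT; apply/eqP.
  + by rewrite lexx (obj_z_step_le feas opt).
- apply: measure_lt_outer; rewrite /outer_measure /= ph size_rcons last_rcons.
  have [_ _ between] := inv_s.
  have outer_le v : (outer_rank v <= rank_bound)%N := rank_below_le _ _.
  set v := obj z' _ _ _ in obj_eq not_stop *.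
  case size_h: (size _) => [|[|n]]; rewrite ?addn0 ?addn1.
  + lia.
  + by have := outer_le v; lia.
  have /between[z [r [zr /andP[cur_le le_last]]]] : (1 < size (st_hist s))%N.
    by rewrite size_h.
  rewrite /current_obj -obj_eq in cur_le.
  rewrite !mul2n -doubleS leq_double.
  apply: (rank_below_lt (fun f : {ffun _} => @refined_obj_functional f)
                        (t := [ffun t => z t]) (r := r)).
  + by rewrite finfunK.
  + rewrite lt_neqAle (le_trans cur_le le_last) andbT; apply/eqP => v_eq.
    apply: not_stop; split=> [hist0 | //]; by rewrite hist0 in size_h.
  + by rewrite cur_le.
- by apply: measure_lt_outer; rewrite /outer_measure /= ph addn0 addn1 ltnSn.
Qed.

Lemma done_terminates s : st_phase s = PhDone -> terminates s.
Proof. by move=> ph; constructor=> s' st; case: st ph => s0 ? -> *; congruence. Qed.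

Lemma invariant_terminates s : invariant s -> terminates s.
Proof.
have [n] := ubnP (measure s); elim: n s => [s | n IH s lt_sn inv_s].
  by rewrite ltn0.
constructor=> s' st; have [/done_terminates | lt_s's] := step_measure inv_s st.
  exact.
exact: IH (leq_trans lt_s's lt_sn) (step_invariant inv_s st).
Qed.

Lemma start_step_invariant s s' : st_phase s = PhInner -> st_hist s = [::] ->
  step s s' -> invariant s'.
Proof.
move=> ph hist st; case: st ph hist => {s s'} [s z' _ opt _ | s z' _ _ _ _ _
  | s z' _ opt _ _ | s H -> //] _ hist0; split; rewrite /= ?hist0 //;
  by split=> //; case: opt.
Qed.

End Algorithm.

Theorem theorem2 (R : realType) (N D K : nat) (x : 'I_N -> 'rV[R]_D)
    (Nmin Nmax : nat) (lam eps : R) (M beta : nat)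
    (hlam : 0 <= lam) (heps : 0 < eps) (hM : (1 < M)%N)
    (z0 : 'I_N -> 'I_K) (c0 : 'I_K -> 'rV[R]_D) :
  (* monotonicity: f_{l+1} <= f_l for all outer iterations l >= 2
     (st_hist s = [:: f_1; f_2; ...], 0-indexed) *)
  (forall s, clos_refl_trans _ (step x Nmin Nmax lam eps M beta)
               (init_state z0 c0) s ->
     forall l : nat, (1 <= l)%N -> (l.+1 < size (st_hist s))%N ->
       nth 0 (st_hist s) l.+1 <= nth 0 (st_hist s) l)
  /\
  (* termination: every execution from the initial state is finite *)
  Acc (fun s' s => step x Nmin Nmax lam eps M beta s s') (init_state z0 c0).
Proof.
have init_inv s' : step x Nmin Nmax lam eps M beta (init_state z0 c0) s' ->
    invariant x Nmin Nmax lam eps M beta s'.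
  by move=> st; apply: start_step_invariant st.
split=> [s /clos_rt_rtn1_iff reach | ].
  have [-> // | [mono _]] :
      s = init_state z0 c0 \/ invariant x Nmin Nmax lam eps M beta s.
    elim: reach => [| s1 s2 st _ [s1_init | inv1]]; first by left.
      by right; rewrite s1_init in st; exact: init_inv.
    by right; apply: (step_invariant hlam inv1).
  exact: mono.
by constructor=> s' st; apply: invariant_terminates hlam _ (init_inv _ st).
Qed.
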